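(* Let $R$ be a commutative ring, $n\ge 1$, and $I$ an $n$-absorbing ideal of $R$. If $I_1,\dots,I_{n+1}$ are u-ideals of $R$ with $I_1I_2\cdots I_{n+1}\subseteq I$, then $I$ contains the product of some $n$ of the ideals $I_1,\dots,I_{n+1}$.
   Context: All rings are commutative with identity $1\neq 0$. An ideal $I$ of $R$ is $n$-absorbing if whenever $x_1,\dots,x_{n+1}\in R$ and $x_1x_2\cdots x_{n+1}\in I$, the product of some $n$ of the $x_i$'s lies in $I$. An ideal $J$ of $R$ is a u-ideal if whenever $J\subseteq J_1\cup\cdots\cup J_m$ for finitely many ideals $J_1,\dots,J_m$ of $R$, then $J\subseteq J_i$ for some $i$. *)

From mathcomp Require Import all_boot all_algebra.
Set Implicit Arguments. Unset Strict Implicit. Unset Printing Implicit Defensive.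
Import GRing.Theory.
Local Open Scope ring_scope.

Definition is_ideal (R : comNzRingType) (I : R -> Prop) : Prop :=
  [/\ I 0,
      (forall x y, I x -> I y -> I (x + y)) &
      (forall r x, I x -> I (r * x))].

Definition idealMul (R : comNzRingType) (I J : R -> Prop) : R -> Prop :=
  fun z => exists (m : nat) (a b : 'I_m -> R),
    (forall k, I (a k) /\ J (b k)) /\ z = \sum_(k < m) a k * b k.

(* Product of a finite list of ideals (the empty product is R itself). *)
Definition idealProd (R : comNzRingType) (s : seq (R -> Prop)) : R -> Prop :=
  foldr (@idealMul R) (fun _ => True) s.

Definition subset_of (R : comNzRingType) (A B : R -> Prop) : Prop :=
  forall x, A x -> B x.

Definition n_absorbing (R : comNzRingType) (n : nat) (I : R -> Prop) : Prop :=
  is_ideal I /\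
  forall x : 'I_n.+1 -> R, I (\prod_(i < n.+1) x i) ->
    exists j : 'I_n.+1, I (\prod_(i < n.+1 | i != j) x i).

Definition u_ideal (R : comNzRingType) (J : R -> Prop) : Prop :=
  is_ideal J /\
  forall (m : nat) (Js : 'I_m -> (R -> Prop)),
    (forall i, is_ideal (Js i)) ->
    (forall x, J x -> exists i, Js i x) ->
    exists i, subset_of J (Js i).

(* The elementwise form of the statement is proved first: there is a j such
   that I contains every product of n elements x_i in I_i, i <> j.  One
   replaces the ideals by fixed elements and frees them one at a time.  When
   the ideal I_t is freed, each y in I_t has, by induction, an index j_y that
   can be omitted once position t is fixed to y.  If j_y = t for some y we are
   done; otherwise I_t is covered by the ideals
   J_j = {y | y * prod_{i <> j, t} x_i in I for all admissible x},  j <> t,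
   and since I_t is a u-ideal it lies in a single J_j, so j works uniformly. *)

From mathcomp Require Import all_boot all_algebra.
From Stdlib Require Import Classical.
Set Implicit Arguments. Unset Strict Implicit. Unset Printing Implicit Defensive.
Import GRing.Theory.
Local Open Scope ring_scope.

Section IdealProd.
Variables (R : comNzRingType) (I : R -> Prop).
Hypothesis idealI : is_ideal I.

Lemma ideal_sum m (F : 'I_m -> R) : (forall k, I (F k)) -> I (\sum_(k < m) F k).
Proof. by case: idealI => I0 ID _ IF; apply: big_ind. Qed.

Lemma idealProd_big (T : eqType) (s : seq T) (A : T -> R -> Prop) (x : T -> R) :
  (forall i, i \in s -> A i (x i)) -> idealProd (map A s) (\prod_(i <- s) x i).
Proof.
elim: s => [|i s IHs] Ax //=; rewrite big_cons.
exists 1%N, (fun=> x i), (fun=> \prod_(j <- s) x j); rewrite big_ord1.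
split=> // _; split; first by apply: Ax; rewrite mem_head.
by apply: IHs => j js; apply: Ax; rewrite in_cons js orbT.
Qed.

(* The multiplier [c] lets the induction absorb one factor at a time. *)
Lemma idealProd_sub (T : eqType) (s : seq T) (A : T -> R -> Prop) c :
  uniq s ->
  (forall x : T -> R, (forall i, i \in s -> A i (x i)) -> I (c * \prod_(i <- s) x i)) ->
  forall z, idealProd (map A s) z -> I (c * z).
Proof.
case: idealI => _ _ IM; elim: s c => [|i s IHs] c /=.
  move=> _ Ac z _; have /(Ac (fun=> 0)) : forall i, i \in [::] -> A i 0 by [].
  by rewrite big_nil mulr1 mulrC; apply: IM.
case/andP=> is_s uniq_s Ac z [m [a [b [Aab ->]]]].
rewrite mulr_sumr; apply: ideal_sum => k; rewrite mulrA.
apply: IHs => // [x Ax|]; last by case: (Aab k).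
pose x' j := if j == i then a k else x j.
have -> : \prod_(j <- s) x j = \prod_(j <- s) x' j.
  apply: eq_big_seq => j js; rewrite /x'.
  by case: eqP => // ji; rewrite -ji js in is_s.
rewrite -mulrA (_ : a k * _ = \prod_(j <- i :: s) x' j).
  by apply: Ac => j; rewrite /x' in_cons; case: eqP => [-> _|_ /Ax //]; exact: (Aab k).1.
by rewrite big_cons /x' eqxx.
Qed.

End IdealProd.

Section AbsorbingProducts.
Variables (R : comNzRingType) (n : nat) (I : R -> Prop) (Is : 'I_n.+1 -> R -> Prop).
Hypothesis absorbingI : n_absorbing n I.
Hypothesis uIs : forall i, u_ideal (Is i).

Let idealI : is_ideal I := proj1 absorbingI.

Definition update (x : 'I_n.+1 -> R) t y i := if i == t then y else x i.

Definition mixed (S : {set 'I_n.+1}) (a x : 'I_n.+1 -> R) :=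
  forall i, if i \in S then Is i (x i) else x i = a i.

Lemma mixed_setD1 (S : {set 'I_n.+1}) a x t y : t \in S ->
  mixed S a x -> mixed (S :\ t) (update a t y) (update x t y).
Proof.
move=> tS ax i; rewrite /update in_setD1.
by case: eqP => //= _; apply: ax.
Qed.

Lemma mixed_setD1_inv (S : {set 'I_n.+1}) a x t y : t \in S -> Is t y ->
  mixed (S :\ t) (update a t y) x -> mixed S a x.
Proof.
move=> tS Iy ax i; have := ax i; rewrite /update in_setD1.
by case: eqP => [-> /= -> | _ //]; rewrite tS.
Qed.

Lemma prod_update_omit (x : 'I_n.+1 -> R) t y :
  \prod_(i | i != t) update x t y i = \prod_(i | i != t) x i.
Proof. by apply: eq_bigr => i /negbTE it; rewrite /update it. Qed.

Lemma prod_update_keep (x : 'I_n.+1 -> R) t y j : j != t ->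
  \prod_(i | i != j) update x t y i = y * \prod_(i | (i != j) && (i != t)) x i.
Proof.
move=> jt; rewrite (bigD1 t) 1?eq_sym //= {1}/update eqxx.
by congr (_ * _); apply: eq_bigr => i /andP[_ /negbTE it]; rewrite /update it.
Qed.

Lemma cofactor_ideal (S : {set 'I_n.+1}) a (j t : 'I_n.+1) : is_ideal (fun y =>
  forall x, mixed S a x -> I (y * \prod_(i | (i != j) && (i != t)) x i)).
Proof.
case: idealI => I0 ID IM; split=> [x _|y z Iy Iz x ax|r y Iy x ax].
- by rewrite mul0r.
- by rewrite mulrDl; apply: ID; [apply: Iy | apply: Iz].
- by rewrite -mulrA; apply: IM; apply: Iy.
Qed.

Lemma mixed_absorbing (S : {set 'I_n.+1}) (a : 'I_n.+1 -> R) :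
  (forall x, mixed S a x -> I (\prod_i x i)) ->
  exists j, forall x, mixed S a x -> I (\prod_(i | i != j) x i).
Proof.
have [k] := ubnP #|S|; elim: k S a => // k IHk S a ltSk absS.
have [S0 | [t tS]] := set_0Vmem S.
  rewrite {}S0 in absS *.
  have pinned x : mixed set0 a x -> x =1 a by move=> ax i; have := ax i; rewrite inE.
  have a_mixed : mixed set0 a a by move=> i; rewrite inE.
  have [j Ij] := (proj2 absorbingI) a (absS a a_mixed).
  by exists j => x /pinned ax; rewrite (eq_bigr a) // => i _; apply: ax.
have ltS'k : (#|S :\ t| < k)%N by move: ltSk; rewrite (cardsD1 t) tS.
have omit_at y : Is t y -> exists j, forall x,
    mixed (S :\ t) (update a t y) x -> I (\prod_(i | i != j) x i).
  move=> Iy; apply: IHk => // x ax; exact/absS/(mixed_setD1_inv tS Iy).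
have [omit_t | not_omit_t] :=
  classic (forall x, mixed S a x -> I (\prod_(i | i != t) x i)); first by exists t.
have omit_other y : Is t y -> exists2 j, j != t & forall x, mixed S a x ->
    I (y * \prod_(i | (i != j) && (i != t)) x i).
  move=> /omit_at[j Ij]; have [jt | jt] := eqVneq j t.
    rewrite {}jt in Ij; case: not_omit_t => x ax; rewrite -(prod_update_omit x t y).
    by apply: Ij; apply: mixed_setD1.
  by exists j => // x ax; rewrite -prod_update_keep //; apply: Ij; apply: mixed_setD1.
(* The indices other than [t] are enumerated as [lift t k], [k : 'I_n]. *)
have [|k' sub] := (proj2 (uIs t)) _ _ (fun k => cofactor_ideal S a (lift t k) t).
  move=> y /omit_other[j jt Ij].
  by case: (unliftP t j) jt Ij => [k' -> _ Ij | ->]; [exists k' | rewrite eqxx].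
exists (lift t k') => x ax; rewrite (bigD1 t) ?neq_lift //=.
by apply: sub => //; have := ax t; rewrite tS.
Qed.

End AbsorbingProducts.

Theorem lemma6 (R : comNzRingType) (n : nat) (I : R -> Prop)
  (Is : 'I_n.+1 -> (R -> Prop)) :
  (1 <= n)%N ->
  n_absorbing n I ->
  (forall i, u_ideal (Is i)) ->
  subset_of (idealProd [seq Is i | i <- enum 'I_n.+1]) I ->
  exists j : 'I_n.+1,
    subset_of (idealProd [seq Is i | i <- enum 'I_n.+1 & i != j]) I.
Proof.
move=> _ absorbingI uIs prod_sub.
have mixedT x : mixed Is setT (fun=> 0) x <-> forall i, Is i (x i).
  by split=> ax i; have := ax i; rewrite inE.
have [|j Ij] := @mixed_absorbing R n I Is absorbingI uIs setT (fun=> 0).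
  move=> x /mixedT Ix; rewrite -big_enum; apply/prod_sub/idealProd_big => i _.
  exact: Ix.
exists j => z Pz; rewrite -[z]mul1r.
apply: (idealProd_sub absorbingI.1 _ _ Pz); first by rewrite filter_uniq ?enum_uniq.
move=> x Ix; rewrite mul1r big_filter big_enum_cond /=.
pose x' i := if i == j then 0 else x i.
rewrite (eq_bigr x') => [|i /negbTE ij]; last by rewrite /x' ij.
apply: Ij; apply/mixedT => i; rewrite /x'; case: eqP => [_|/eqP ij].
  by case: (uIs i) => -[].
by apply: Ix; rewrite mem_filter ij mem_enum.
Qed.
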